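(* For $k=2$, every initial store $IS\in\{\Box,\blacksquare\}^2$ and all $i,j\in\{1,2\}$, there is no correct compositional translation from $\mathrm{SYNCSIMPLE}$ into $\mathrm{LOCKSIMPLE}_{2,IS}$ of blocking type $(P_iP_i,P_jP_j)$.
   Context: $\mathrm{SYNCSIMPLE}$: subprocesses $\mathcal{U} ::= \checkmark \mid 0 \mid\, !\mathcal{U} \mid\, ?\mathcal{U}$; processes are finite parallel compositions $\mathcal{U}_1\mid\cdots\mid\mathcal{U}_n$ ($\mid$ associative, commutative, $0$ a unit). Reduction: $!\mathcal{U}_1\mid ?\mathcal{U}_2\mid \mathcal{P}\to \mathcal{U}_1\mid\mathcal{U}_2\mid\mathcal{P}$. Successful: of form $\checkmark\mid\mathcal{P}$; may-convergent: reduces to a successful process; must-convergent: every reachable process is may-convergent. $\mathrm{LOCKSIMPLE}_{k,IS}$ ($IS\in\{\Box,\blacksquare\}^k$, $\Box$ empty, $\blacksquare$ full): subprocesses are words over $\{P_1,T_1,\dots,P_k,T_k\}$ followed by $0$ or $\checkmark$; states $(\mathcal{P},C)$ reduce by $(P_i\mathcal{U}\mid\mathcal{P},C)\to(\mathcal{U}\mid\mathcal{P},C[C_i:=\blacksquare])$ only if $C_i=\Box$, and $(T_i\mathcal{U}\mid\mathcal{P},C)\to(\mathcal{U}\mid\mathcal{P},C[C_i:=\Box])$ always. Success = process contains $\checkmark$; a process $\mathcal{P}$ is may/must-convergent iff the state $(\mathcal{P},IS)$ is. A compositional translation $\tau$ is given by words $\tau(!),\tau(?)$ with $\tau(0)=0$,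 $\tau(\checkmark)=\checkmark$, $\tau(!\mathcal{U})=\tau(!)\tau(\mathcal{U})$, $\tau(?\mathcal{U})=\tau(?)\tau(\mathcal{U})$, $\tau$ commuting with $\mid$; correct = preserves and reflects may- and must-convergence. Blocking type: for a word $S$, run $S$ as a single subprocess from $IS$; if it gets stuck at an occurrence of $P_i$, that occurrence ends the blocking prefix; if it is the first symbol from $\{P_i,T_i\}$ in $S$ (prefix $RP_i$, $R$ without $P_i,T_i$) the blocking type is $P_i$, otherwise the prefix has form $R_1P_iR_2P_i$, $R_2$ without $P_i,T_i$, and the blocking type is $P_iP_i$. $\tau$ has blocking type $(W_1,W_2)$ if $\tau(!)$ has type $W_1$ and $\tau(?)$ type $W_2$. *)

From mathcomp Require Import ssreflect ssrfun ssrbool eqtype ssrnat seq fintype.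
From Stdlib Require Import Permutation Relation_Operators.

Set Implicit Arguments.
Unset Strict Implicit.
Unset Printing Implicit Defensive.

Definition may_conv {S : Type} (step : S -> S -> Prop) (succ : S -> Prop) (x : S) : Prop :=
  exists y, clos_refl_trans S step x y /\ succ y.
Definition must_conv {S : Type} (step : S -> S -> Prop) (succ : S -> Prop) (x : S) : Prop :=
  forall y, clos_refl_trans S step x y -> may_conv step succ y.

Inductive SU : Type :=
| STick : SU
| SZero : SU
| SSnd : SU -> SU
| SRcv : SU -> SU.

(* Processes: finite parallel compositions, as lists up to permutation. *)
Definition SProc := list SU.

Inductive sstep : SProc -> SProc -> Prop :=
| sstep_sync u1 u2 rest P :
    Permutation P (SSnd u1 :: SRcv u2 :: rest) ->
    sstep P (u1 :: u2 :: rest).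

Definition ssucc (P : SProc) : Prop := exists rest, Permutation P (STick :: rest).

Definition s_may (P : SProc) := may_conv sstep ssucc P.
Definition s_must (P : SProc) := must_conv sstep ssucc P.

(* Locks are indexed by 'I_k (lock number i+1 of the paper is the ordinal i). *)
Inductive Sym (k : nat) : Type :=
| LP : 'I_k -> Sym k
| LT : 'I_k -> Sym k.

(* A subprocess is a word followed by 0 (false) or checkmark (true). *)
Definition LU (k : nat) := (list (Sym k) * bool)%type.
Definition LProc (k : nat) := list (LU k).
(* Store: true = full (black square), false = empty (white square). *)
Definition Store (k : nat) := 'I_k -> bool.
Definition upd k (C : Store k) (i : 'I_k) (b : bool) : Store k :=
  fun j => if j == i then b else C j.
Definition LState (k : nat) := (LProc k * Store k)%type.

Inductive lstep (k : nat) : LState k -> LState k -> Prop :=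
| lstep_P (P : LProc k) (C : Store k) i w e rest :
    Permutation P ((LP i :: w, e) :: rest) -> C i = false ->
    lstep (P, C) ((w, e) :: rest, upd C i true)
| lstep_T (P : LProc k) (C : Store k) i w e rest :
    Permutation P ((LT i :: w, e) :: rest) ->
    lstep (P, C) ((w, e) :: rest, upd C i false).

Definition lsucc k (s : LState k) : Prop :=
  exists rest, Permutation s.1 ((nil, true) :: rest).

Definition l_may k (IS : Store k) (P : LProc k) := may_conv (@lstep k) (@lsucc k) (P, IS).
Definition l_must k (IS : Store k) (P : LProc k) := must_conv (@lstep k) (@lsucc k) (P, IS).

(* Given by the words tsnd = tau(!) and trcv = tau(?). *)
Fixpoint tr_sub k (tsnd trcv : list (Sym k)) (u : SU) : LU k :=
  match u with
  | STick => (nil, true)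
  | SZero => (nil, false)
  | SSnd u' => (tsnd ++ (tr_sub tsnd trcv u').1, (tr_sub tsnd trcv u').2)
  | SRcv u' => (trcv ++ (tr_sub tsnd trcv u').1, (tr_sub tsnd trcv u').2)
  end.

Definition tr_proc k (tsnd trcv : list (Sym k)) (P : SProc) : LProc k :=
  List.map (tr_sub tsnd trcv) P.

Definition correct_translation k (IS : Store k) (tsnd trcv : list (Sym k)) : Prop :=
  forall P : SProc,
    (s_may P <-> l_may IS (tr_proc tsnd trcv P)) /\
    (s_must P <-> l_must IS (tr_proc tsnd trcv P)).

(* Run a word as a single subprocess; None = gets stuck. *)
Fixpoint exec k (C : Store k) (w : list (Sym k)) : option (Store k) :=
  match w with
  | nil => Some C
  | LP i :: w' => if C i then None else exec (upd C i true) w'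
  | LT i :: w' => exec (upd C i false) w'
  end.

Inductive BType (k : nat) : Type :=
| BT_P : 'I_k -> BType k
| BT_PP : 'I_k -> BType k.

Definition no_idx k (i : 'I_k) (R : list (Sym k)) : Prop :=
  ~ List.In (LP i) R /\ ~ List.In (LT i) R.

(* The blocking prefix of S (run from IS) is R ++ [P_i]: R runs without
   getting stuck and then P_i gets stuck. *)
Definition blocking_prefix k (IS : Store k) (S : list (Sym k)) (R : list (Sym k)) (i : 'I_k) : Prop :=
  exists rest C, S = R ++ LP i :: rest /\ exec IS R = Some C /\ C i = true.

Definition has_btype k (IS : Store k) (S : list (Sym k)) (bt : BType k) : Prop :=
  match bt with
  | BT_P i => exists R, blocking_prefix IS S R i /\ no_idx i R
  | BT_PP i => exists R1 R2, blocking_prefix IS S (R1 ++ LP i :: R2) i /\ no_idx i R2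
  end.

Definition translation_btype k (IS : Store k) (tsnd trcv : list (Sym k)) (b1 b2 : BType k) : Prop :=
  has_btype IS tsnd b1 /\ has_btype IS trcv b2.

(* A correct translation keeps the must-convergent processes !✓ | ?0, !0 | ?✓, !✓ | ?!0 and
   !?0 | ?✓ must-convergent: no interleaving of the two translated threads may get stuck
   before ✓ shows up. If τ(!) gets stuck at P_i, the first i-symbol of τ(?) cannot be P_i,
   for running τ(!) to its block and then τ(?) as far as it goes would deadlock !✓ | ?0; and
   symmetrically. When both words block on the same lock, this forces a word's blocking
   prefix, run after the other one's, to stop at a full lock as well, again a deadlock.
   When they block on the two different locks, each word gets stuck at its own lock from
   every store. Then let the two threads alternate, each running until it waits on its own
   lock again: the words shrink at every round, so this ends in a deadlock, where a thread
   that terminates is followed by a second copy of the other word in !✓ | ?!0 or !?0 | ?✓. *)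

From mathcomp Require Import ssreflect ssrfun ssrbool eqtype ssrnat seq fintype.
From mathcomp Require Import zify.
From Stdlib Require Import Permutation Relation_Operators Operators_Properties.

Set Implicit Arguments.
Unset Strict Implicit.
Unset Printing Implicit Defensive.

Lemma clos_refl_trans_map (A B : Type) (R : A -> A -> Prop) (R' : B -> B -> Prop)
    (f : A -> B) :
  (forall x y, R x y -> R' (f x) (f y)) ->
  forall x y, clos_refl_trans A R x y -> clos_refl_trans B R' (f x) (f y).
Proof.
move=> fR x y; elim=> [x' y' /fR|x'|x' y' z' _ rxy _ ryz]; first exact: rt_step.
- exact: rt_refl.
- exact: rt_trans rxy ryz.
Qed.

Lemma ord2_other (a b c : 'I_2) : a != b -> c != a -> c = b.
Proof.
by case: a b c => [[|[|?]] ?] [[|[|?]] ?] [[|[|?]] ?] //= _ _; apply: val_inj.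
Qed.

Section Words.
Variable k : nat.
Implicit Types (C D : Store k) (u v w R : seq (Sym k)) (i c : 'I_k).

Definition sym_lock (s : Sym k) : 'I_k := match s with LP i | LT i => i end.

Definition locks w : seq 'I_k := map sym_lock w.

Definition halted C w : bool :=
  match w with [::] => true | LP i :: _ => C i | LT _ :: _ => false end.

Definition opens_with_P w i : Prop :=
  exists u v, w = u ++ LP i :: v /\ i \notin locks u.

Definition blocks_at C w i : Prop := exists R, blocking_prefix C w R i.

Lemma in_locks_mid R1 R2 i : i \in locks (R1 ++ LP i :: R2).
Proof. by rewrite /locks map_cat mem_cat inE eqxx orbT. Qed.

Lemma upd_eq C i b : upd C i b i = b.
Proof. by rewrite /upd eqxx. Qed.

Lemma upd_neq C i c b : c != i -> upd C i b c = C c.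
Proof. by rewrite /upd => /negbTE ->. Qed.

Lemma halted_cat_P C u v i : halted C u -> C i -> halted C (u ++ LP i :: v).
Proof. by case: u => [|[] ? ?]. Qed.

Lemma exec_cat C u v : exec C (u ++ v) = obind (fun D => exec D v) (exec C u).
Proof. by elim: u C => [|[] i u IH] C //=; case: (C i). Qed.

Lemma exec_frame C D w c : exec C w = Some D -> c \notin locks w -> D c = C c.
Proof.
elim: w C => [|[] i w IH] C /=; first by case=> ->.
- case: (C i) => // /IH; rewrite inE negb_or => frame /andP[ci cw].
  by rewrite frame // upd_neq.
- move=> /IH frame; rewrite inE negb_or => /andP[ci cw].
  by rewrite frame // upd_neq.
Qed.

Lemma exec_agree C1 C2 D1 D2 w c :
  exec C1 w = Some D1 -> exec C2 w = Some D2 -> c \in locks w -> D1 c = D2 c.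
Proof.
elim: w C1 C2 => [|s w IH] C1 C2 //.
have step b i : exec (upd C1 i b) w = Some D1 -> exec (upd C2 i b) w = Some D2 ->
    c \in i :: locks w -> D1 c = D2 c.
  move=> E1 E2; case cw: (c \in locks w); first by move=> _; exact: IH E1 E2 cw.
  rewrite inE cw orbF => /eqP ci; subst c.
  by rewrite (exec_frame E1) ?(exec_frame E2) ?cw ?upd_eq.
case: s => i /=; last exact: step.
by case: (C1 i) => //; case: (C2 i) => //; exact: step.
Qed.

Lemma exec_max C w : exists u v D, w = u ++ v /\ exec C u = Some D /\ halted D v.
Proof.
elim: w C => [|[] i w IH] C; first by exists [::], [::], C.
- case Ci: (C i); first by exists [::], (LP i :: w), C.
  have [u [v [D [-> [Eu hv]]]]] := IH (upd C i true).
  by exists (LP i :: u), v, D; rewrite /= Ci.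
- have [u [v [D [-> [Eu hv]]]]] := IH (upd C i false).
  by exists (LT i :: u), v, D.
Qed.

Lemma exec_None_blocking C w : exec C w = None -> exists R i, blocking_prefix C w R i.
Proof.
have [u [v [D [-> [Eu hv]]]]] := exec_max C w.
rewrite exec_cat Eu /=; case: v hv => [|[] i v] //= Di _.
by exists u, i, v, D.
Qed.

Lemma blocking_prefix_frame C w R c :
  blocking_prefix C w R c -> c \notin locks R -> C c.
Proof. by move=> [rest [D [_ [ER Dc]]]] cR; rewrite -(exec_frame ER cR). Qed.

Lemma blocking_prefix_catr C u v R c :
  blocking_prefix C u R c -> blocking_prefix C (u ++ v) R c.
Proof. by move=> [rest [D [-> ER]]]; exists (rest ++ v), D; rewrite -catA. Qed.

Lemma opens_with_P_blocking C w R c :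
  blocking_prefix C w R c -> c \notin locks R -> opens_with_P w c.
Proof. by move=> [rest [D [Ew _]]] cR; exists R, rest. Qed.

Lemma exec_diverge C1 C2 D1 w :
  exec C1 w = Some D1 -> exec C2 w = None ->
  exists R c, [/\ blocking_prefix C2 w R c, c \notin locks R & C1 c = false].
Proof.
move=> E1 /exec_None_blocking [R [c [rest [D [Ew [ER Dc]]]]]].
move: E1; rewrite Ew exec_cat; case E1R: (exec C1 R) => [D1'|] //=.
case D1c: (D1' c) => // _.
have cR : c \notin locks R.
  by apply/negP => cR; rewrite (exec_agree E1R ER cR) Dc in D1c.
exists R, c; split => //; first by exists rest, D.
by rewrite -(exec_frame E1R cR).
Qed.

Lemma blocks_at_any C0 w R a :
  blocking_prefix C0 w R a -> a \in locks R ->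
  (forall c, opens_with_P w c -> c = a) -> forall C, blocks_at C w a.
Proof.
move=> [rest [D0 [Ew [ER D0a]]]] aR opens C.
case EC: (exec C R) => [D|].
  by exists R, rest, D; rewrite -(exec_agree ER EC aR).
have [R' [c [bc cR' _]]] := exec_diverge ER EC.
have bw : blocking_prefix C w R' c by rewrite Ew; exact: blocking_prefix_catr.
have ca := opens _ (opens_with_P_blocking bw cR').
by exists R'; rewrite -ca.
Qed.

End Words.

Section Threads.
Variable k : nat.
Implicit Types (C D : Store k) (u x y : seq (Sym k)).

Definition conf := (seq (Sym k) * seq (Sym k) * Store k)%type.

Inductive step2 : conf -> conf -> Prop :=
| step2_l s x y C D : exec C [:: s] = Some D -> step2 (s :: x, y, C) (x, y, D)
| step2_r s x y C D : exec C [:: s] = Some D -> step2 (x, s :: y, C) (x, y, D).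

Definition reach2 := clos_refl_trans conf step2.

Lemma reach2_swap x y C x' y' C' :
  reach2 (x, y, C) (x', y', C') -> reach2 (y, x, C) (y', x', C').
Proof.
apply: (clos_refl_trans_map (f := fun p : conf => (p.1.2, p.1.1, p.2))).
by move=> _ _ [] *; [apply: step2_r | apply: step2_l].
Qed.

Lemma reach2_catr z x y C x' y' C' :
  reach2 (x, y, C) (x', y', C') -> reach2 (x, y ++ z, C) (x', y' ++ z, C').
Proof.
apply: (clos_refl_trans_map (f := fun p : conf => (p.1.1, p.1.2 ++ z, p.2))).
by move=> _ _ [] *; [apply: step2_l | apply: step2_r].
Qed.

Lemma reach2_runl C D u x y : exec C u = Some D -> reach2 (u ++ x, y, C) (x, y, D).
Proof.
elim: u C => [|s u IH] C; first by case=> ->; exact: rt_refl.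
rewrite -cat1s exec_cat; case E: (exec C [:: s]) => [C'|] //= /IH.
by apply: rt_trans; apply: rt_step; apply: step2_l.
Qed.

Lemma reach2_runr C D u x y : exec C u = Some D -> reach2 (x, u ++ y, C) (x, y, D).
Proof. by move/reach2_runl/reach2_swap. Qed.

Definition pair_proc ex ey (p : conf) : LProc k := [:: (p.1.1, ex); (p.1.2, ey)].

(* [lstep] moves the subprocess it runs to the front, hence the permutations. *)
Lemma step2_lstep ex ey p q P :
  step2 p q -> Permutation P (pair_proc ex ey p) ->
  exists P', Permutation P' (pair_proc ex ey q) /\ lstep (P, p.2) (P', q.2).
Proof.
case=> [[] i x y C D|[] i x y C D] /=.
- case Ci: (C i) => //; case=> <- HP.
  by exists [:: (x, ex); (y, ey)]; split => //; apply: lstep_P.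
- case=> <- HP.
  by exists [:: (x, ex); (y, ey)]; split => //; apply: lstep_T.
- case Ci: (C i) => //; case=> <- HP.
  exists [:: (y, ey); (x, ex)]; split; first exact: perm_swap.
  by apply: lstep_P Ci; apply: perm_trans HP (perm_swap _ _ _).
- case=> <- HP.
  exists [:: (y, ey); (x, ex)]; split; first exact: perm_swap.
  by apply: lstep_T; apply: perm_trans HP (perm_swap _ _ _).
Qed.

Lemma reach2_lsteps ex ey p q P :
  reach2 p q -> Permutation P (pair_proc ex ey p) ->
  exists P', Permutation P' (pair_proc ex ey q) /\
    clos_refl_trans _ (@lstep k) (P, p.2) (P', q.2).
Proof.
move=> r; elim: r P => [p' q' st|p'|p' q' r' _ IH1 _ IH2] P HP.
- have [P' [HP' st']] := step2_lstep st HP.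
  by exists P'; split => //; apply: rt_step.
- by exists P; split => //; apply: rt_refl.
- have [P1 [HP1 r1]] := IH1 P HP; have [P2 [HP2 r2]] := IH2 P1 HP1.
  by exists P2; split => //; apply: rt_trans r1 r2.
Qed.

Definition deadlocked C (p : LU k) : bool := halted C p.1 && ~~ (nilp p.1 && p.2).

Lemma lstep_deadlocked s t :
  lstep s t -> (forall p, List.In p s.1 -> deadlocked s.2 p) -> False.
Proof.
case=> [P C i w e rest HP Ci|P C i w e rest HP] /= dead;
  have := dead _ (Permutation_in _ (Permutation_sym HP) (List.in_eq _ _));
  by rewrite /deadlocked /= ?Ci.
Qed.

Lemma deadlocked_not_may P C :
  (forall p, List.In p P -> deadlocked C p) -> ~ may_conv (@lstep k) (@lsucc k) (P, C).
Proof.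
move=> dead [t [rt [rest Hs]]].
case: {rt}(clos_rt_rt1n _ _ _ _ rt) Hs => [|s t' st _] Hs.
- by have := dead _ (Permutation_in _ (Permutation_sym Hs) (List.in_eq _ _)).
- exact: lstep_deadlocked st dead.
Qed.

Definition deadlock_free C0 x0 ex y0 ey : Prop :=
  forall x y C, reach2 (x0, y0, C0) (x, y, C) ->
    deadlocked C (x, ex) -> deadlocked C (y, ey) -> False.

Lemma must_deadlock_free C0 x0 ex y0 ey :
  must_conv (@lstep k) (@lsucc k) ([:: (x0, ex); (y0, ey)], C0) ->
  deadlock_free C0 x0 ex y0 ey.
Proof.
move=> must x y C r dx dy.
have [P [HP rP]] := reach2_lsteps r (Permutation_refl (pair_proc ex ey (x0, y0, C0))).
by apply: deadlocked_not_may (must _ rP) => p /(Permutation_in _ HP) [<-|[<-|[]]].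
Qed.

Lemma deadlock_free_sym C0 x0 ex y0 ey :
  deadlock_free C0 x0 ex y0 ey -> deadlock_free C0 y0 ey x0 ex.
Proof. by move=> df x y C /reach2_swap r dx dy; apply: df r dy dx. Qed.

Lemma parked_deadlock C0 x0 ex y0 ey c d x y C :
  deadlock_free C0 x0 ex y0 ey -> reach2 (x0, y0, C0) (LP c :: x, LP d :: y, C) ->
  C c -> C d -> False.
Proof. by move=> df r Cc Cd; apply: (df _ _ _ r); rewrite /deadlocked /= andbT. Qed.

End Threads.

Lemma ssucc_In P : ssucc P <-> List.In STick P.
Proof.
split=> [[rest HP]|tick].
  by apply: Permutation_in (Permutation_sym HP) _; left.
have [l1 [l2 ->]] := List.in_split _ _ tick.
by exists (List.app l1 l2); apply: Permutation_sym; apply: Permutation_middle.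
Qed.

Lemma ssucc_sstep P P' : sstep P P' -> ssucc P -> ssucc P'.
Proof.
case=> v1 v2 rest {}P HP /ssucc_In tick; apply/ssucc_In.
by case: (Permutation_in _ HP tick) => [|[|]] //= tick'; right; right.
Qed.

Lemma ssucc_reach P P' : clos_refl_trans _ sstep P P' -> ssucc P -> ssucc P'.
Proof.
elim=> [? ? /ssucc_sstep|//|_ _ _ _ IH1 _ IH2 /IH1 /IH2] //.
Qed.

Lemma sstep_sync_inv u1 u2 P : sstep [:: SSnd u1; SRcv u2] P -> P = [:: u1; u2].
Proof.
move E: [:: SSnd u1; SRcv u2] => P0 st; case: st E => v1 v2 rest P1 HP E.
rewrite -E in HP.
by case: (Permutation_length_2_inv HP) => [[-> -> ->]|].
Qed.

Lemma s_must_sync u1 u2 : ssucc [:: u1; u2] -> s_must [:: SSnd u1; SRcv u2].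
Proof.
move=> succ P rt; case: {rt}(clos_rt_rt1n _ _ _ _ rt) => [|P1 P2 st rt].
  by exists [:: u1; u2]; split => //; apply/rt_step/sstep_sync/Permutation_refl.
exists P2; split; first exact: rt_refl.
by apply: ssucc_reach (clos_rt1n_rt _ _ _ _ rt) _; rewrite (sstep_sync_inv st).
Qed.

Lemma correct_deadlock_free k (IS : Store k) S Q u1 u2 :
  correct_translation IS S Q -> ssucc [:: u1; u2] ->
  deadlock_free IS (S ++ (tr_sub S Q u1).1) (tr_sub S Q u1).2
                   (Q ++ (tr_sub S Q u2).1) (tr_sub S Q u2).2.
Proof.
move=> correct /s_must_sync must; apply: must_deadlock_free.
exact: (proj1 (correct _).2 must).
Qed.

Lemma blocking_not_opens_with_P k (IS : Store k) S Q R i :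
  deadlock_free IS S true Q false -> blocking_prefix IS S R i -> ~ opens_with_P Q i.
Proof.
move=> df [rest [CS [ES [ER CSi]]]] [u [v [EQ iu]]].
have [u1 [u2 [D [Eu [Eu1 hu2]]]]] := exec_max CS u.
have Di : D i.
  by move: iu; rewrite Eu /locks map_cat mem_cat negb_or => /andP[/(exec_frame Eu1) ->].
apply: (df (LP i :: rest) (u2 ++ LP i :: v) D).
- rewrite ES EQ Eu -catA.
  by apply: rt_trans (reach2_runl _ _ ER) (reach2_runr _ _ Eu1).
- by rewrite /deadlocked /= Di.
- by rewrite /deadlocked /= andbF andbT; apply: halted_cat_P.
Qed.

Lemma same_lock_deadlock (IS : Store 2) S Q RS RQ a :
  deadlock_free IS S true Q false -> deadlock_free IS S false Q true ->
  blocking_prefix IS S RS a -> a \in locks RS ->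
  blocking_prefix IS Q RQ a -> a \in locks RQ -> False.
Proof.
move=> df_snd df_rcv bS aRS bQ aRQ.
have notS := blocking_not_opens_with_P (deadlock_free_sym df_rcv) bQ.
have notQ := blocking_not_opens_with_P df_snd bS.
case: bS => restS [CS [ES [ERS CSa]]]; case: (bQ) => restQ [CQ [EQ [ERQ CQa]]].
have rQ : reach2 (S, Q, IS) (S, LP a :: restQ, CQ).
  by rewrite {1}EQ; apply: reach2_runr.
case ERS_CQ: (exec CQ RS) => [D|].
  have Da : D a by rewrite -(exec_agree ERS ERS_CQ aRS).
  apply: (parked_deadlock df_snd _ Da Da).
  by apply: rt_trans rQ _; rewrite {1}ES; apply: reach2_runl.
(* S's prefix, run after Q's, stops at the other lock o, which Q's prefix fills. *)
have [u [o [bo ou ISo]]] := exec_diverge ERS ERS_CQ.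
have ao : a != o.
  apply/eqP => ao; subst o.
  have bS : blocking_prefix CQ S u a by rewrite ES; apply: blocking_prefix_catr.
  exact: notS (opens_with_P_blocking bS ou).
have CQo := blocking_prefix_frame bo ou.
have oRQ : o \in locks RQ by apply: contraT => /(exec_frame ERQ); rewrite CQo ISo.
case: bo => rest [_ [ERS' _]].
have [E ERu] : exists E, exec IS u = Some E.
  by move: ERS; rewrite ERS' exec_cat; case: (exec IS u) => // E; exists E.
have Eo : E o = false by rewrite (exec_frame ERu ou).
have rS : reach2 (S, Q, IS) (LP o :: rest ++ LP a :: restS, Q, E).
  by rewrite {1}ES ERS' -catA; apply: reach2_runl.
case ERQ_E: (exec E RQ) => [D|].
  have Do : D o by rewrite -(exec_agree ERQ ERQ_E oRQ).
  have Da : D a by rewrite -(exec_agree ERQ ERQ_E aRQ).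
  apply: (parked_deadlock df_snd (y := restQ) _ Do Da).
  by apply: rt_trans rS _; rewrite {1}EQ; apply: reach2_runr.
have [u' [c [bc cu' _]]] := exec_diverge ERQ ERQ_E.
have Ec := blocking_prefix_frame bc cu'.
have [ca|ca] := eqVneq c a.
  subst c.
  have bQ' : blocking_prefix E Q u' a by rewrite EQ; apply: blocking_prefix_catr.
  exact: notQ (opens_with_P_blocking bQ' cu').
by rewrite (ord2_other ao ca) Eo in Ec.
Qed.

Section DistinctLocks.
Variables (IS : Store 2) (S Q : seq (Sym 2)) (a b : 'I_2).
Hypothesis ab : a != b.
Hypothesis df_snd : deadlock_free IS S true Q false.
Hypothesis df_snd_seq : deadlock_free IS S true (Q ++ S) false.
Hypothesis S_blocks : forall C, blocks_at C S a.

Lemma parked_rcv_progress x y C :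
  reach2 (S, Q, IS) (LP a :: x, LP b :: y, C) -> C b = false ->
  exists y' D, reach2 (S, Q, IS) (LP a :: x, LP b :: y', D) /\ size y' < size y.
Proof.
move=> r Cb.
have [u [v [D [Ey [Eu hv]]]]] := exec_max C (LP b :: y).
have r' : reach2 (S, Q, IS) (LP a :: x, v, D).
  by apply: rt_trans r _; rewrite Ey; apply: reach2_runr.
case Da: (D a).
  by exfalso; apply: (df_snd r'); rewrite /deadlocked /= ?Da ?andbF ?andbT.
case: v Ey hv r' => [|[] c v] Ey //= Dc r'.
  (* Q has terminated; in !✓ | ?!0 the receiver goes on with S, which blocks at P_a. *)
  have [R [rest [D' [ES [ER D'a]]]]] := S_blocks D.
  exfalso; apply: (parked_deadlock df_snd_seq (x := x) (y := rest) _ D'a D'a).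
  apply: rt_trans (reach2_catr S r) _.
  rewrite Ey cats0 {1}ES; apply: rt_trans (reach2_runr _ _ Eu) (reach2_runr _ _ ER).
have cb : c = b by apply: ord2_other ab _; apply: contraFneq _ Da => <-.
subst c; exists v, D; split => //.
case: u Ey Eu => [|s u] /=; last by move=> [_ ->] _; rewrite size_cat /=; lia.
by move=> [->] [CD]; rewrite -CD Cb in Dc.
Qed.

End DistinctLocks.

Lemma distinct_locks_deadlock (IS : Store 2) S Q a b : a != b ->
  deadlock_free IS S true Q false -> deadlock_free IS S false Q true ->
  deadlock_free IS S true (Q ++ S) false -> deadlock_free IS (S ++ Q) false Q true ->
  (forall C, blocks_at C S a) -> (forall C, blocks_at C Q b) -> False.
Proof.
move=> ab df_snd df_rcv df_snd_seq df_rcv_seq S_blocks Q_blocks.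
have ba : b != a by rewrite eq_sym.
suff parked n x y C : size x + size y < n ->
    reach2 (S, Q, IS) (LP a :: x, LP b :: y, C) -> False.
  have [RQ [restQ [CQ [EQ [ERQ _]]]]] := Q_blocks IS.
  have [RS [restS [D [ES [ERS _]]]]] := S_blocks CQ.
  apply: (parked _ restS restQ D (ltnSn _)).
  apply: (@rt_trans _ _ _ (S, LP b :: restQ, CQ)).
    by rewrite {1}EQ; apply: reach2_runr.
  by rewrite {1}ES; apply: reach2_runl.
elim: n x y C => [//|n IH] x y C sz r.
case Cb: (C b).
  case Ca: (C a); first exact: parked_deadlock df_snd r Ca Cb.
  have [x' [D [r' sx]]] := parked_rcv_progress ba (deadlock_free_sym df_rcv)
    (deadlock_free_sym df_rcv_seq) Q_blocks (reach2_swap r) Ca.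
  by apply: (IH x' y D) (reach2_swap r'); lia.
have [y' [D [r' sy]]] := parked_rcv_progress ab df_snd df_snd_seq S_blocks r Cb.
by apply: (IH x y' D) r'; lia.
Qed.

Lemma blocks_at_everywhere (IS : Store 2) S Q RS RQ i j :
  i != j -> deadlock_free IS Q true S false ->
  blocking_prefix IS S RS i -> i \in locks RS -> blocking_prefix IS Q RQ j ->
  forall C, blocks_at C S i.
Proof.
move=> ij df bS iRS bQ; apply: (blocks_at_any bS iRS) => c oc.
apply/eqP; apply: contraT => ci.
rewrite (ord2_other ij ci) in oc; case: (blocking_not_opens_with_P df bQ oc).
Qed.

Theorem proposition5p9 :
  forall (IS : Store 2) (i j : 'I_2) (tsnd trcv : list (Sym 2)),
    translation_btype IS tsnd trcv (BT_PP i) (BT_PP j) ->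
    ~ correct_translation IS tsnd trcv.
Proof.
move=> IS i j S Q [[RS1 [RS2 [bS _]]] [RQ1 [RQ2 [bQ _]]]] correct.
have df u1 u2 := correct_deadlock_free (u1 := u1) (u2 := u2) correct.
have df_snd : deadlock_free IS S true Q false.
  by have := df STick SZero; rewrite /= !cats0; apply; apply/ssucc_In; left.
have df_rcv : deadlock_free IS S false Q true.
  by have := df SZero STick; rewrite /= !cats0; apply; apply/ssucc_In; right; left.
have df_snd_seq : deadlock_free IS S true (Q ++ S) false.
  by have := df STick (SSnd SZero); rewrite /= !cats0; apply; apply/ssucc_In; left.
have df_rcv_seq : deadlock_free IS (S ++ Q) false Q true.
  by have := df (SRcv SZero) STick; rewrite /= !cats0; apply; apply/ssucc_In; right; left.
have [ij|ij] := eqVneq i j.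
  subst j; exact: same_lock_deadlock df_snd df_rcv bS (in_locks_mid _ _ _) bQ (in_locks_mid _ _ _).
apply: (distinct_locks_deadlock ij df_snd df_rcv df_snd_seq df_rcv_seq).
  exact: blocks_at_everywhere ij (deadlock_free_sym df_rcv) bS (in_locks_mid _ _ _) bQ.
by apply: blocks_at_everywhere _ df_snd bQ (in_locks_mid _ _ _) bS; rewrite eq_sym.
Qed.
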